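(* Let $q$ be a prime number, let $l>2$ be an integer, and consider $m=q^l$ inputs each of size one with reducer capacity $q$. Then there is an A2A mapping schema for these inputs using at most $q\cdot(q(q+1))^{l-1}$ reducers and having communication cost at most $q^2\cdot(q(q+1))^{l-1}$.
   Context: An A2A mapping schema for inputs with sizes $w_1,\dots,w_m$ and reducer capacity $q$ is an assignment of the inputs to a collection of reducers (each input may go to several reducers) such that every reducer receives inputs of total size at most $q$ and every pair of distinct inputs is assigned together to at least one reducer. The communication cost is the sum over reducers of the total size of the inputs assigned to it. *)

From mathcomp Require Import all_boot.
Set Implicit Arguments. Unset Strict Implicit. Unset Printing Implicit Defensive.

(* Inputs are indexed by 'I_m, input i has size w i.
   A mapping schema is a finite list of reducers; each reducer is the set of
   inputs assigned to it (an input may belong to several reducers). *)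

Definition load (m : nat) (w : 'I_m -> nat) (r : {set 'I_m}) : nat :=
  \sum_(i in r) w i.

Definition is_A2A_schema (m : nat) (w : 'I_m -> nat) (q : nat)
    (R : seq {set 'I_m}) : Prop :=
  (forall r, r \in R -> load w r <= q) /\
  (forall i j : 'I_m, i != j -> exists2 r, r \in R & (i \in r) && (j \in r)).

Definition comm_cost (m : nat) (w : 'I_m -> nat) (R : seq {set 'I_m}) : nat :=
  \sum_(r <- R) load w r.

From mathcomp Require Import all_boot zify.

Set Implicit Arguments.
Unset Strict Implicit.
Unset Printing Implicit Defensive.

(* Cut the q^l unit-size inputs into blocks of g = q/2 consecutive inputs and
   use one reducer for each pair of blocks: it receives at most 2g <= q inputs,
   and every pair of inputs lies in some pair of blocks.  With about 2q^(l-1)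
   blocks this takes about 2q^(2l-2) reducers, which is below
   q^l (q+1)^(l-1) as soon as l >= 3 (this is q^l <= (q-1)(q+1)^(l-1)); each
   reducer costs at most q.  Primality of q is only used through q >= 2. *)

Section BlockPairs.

Variables (m g : nat).

(* The ceiling of m / g when 0 < m; block a consists of the i with i %/ g = a. *)
Definition nblocks : nat := m.-1 %/ g + 1.

Definition block_pair (a b : nat) : {set 'I_m} :=
  [set i : 'I_m | (i %/ g == a) || (i %/ g == b)].

Definition block_pairs : seq {set 'I_m} :=
  [seq block_pair a b | a <- iota 0 nblocks, b <- iota 0 a].

Lemma size_block_pairs : size block_pairs = 'C(nblocks, 2).
Proof.
rewrite size_allpairs_dep -bin2_sum /index_iota subn0 -sumnE.
by under eq_map do rewrite size_iota; rewrite map_id.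
Qed.

Lemma block_pair_in a b : b < a < nblocks -> block_pair a b \in block_pairs.
Proof. by case/andP=> ba ak; apply: allpairs_f_dep; rewrite mem_iota. Qed.

Hypothesis g_gt0 : 0 < g.

Lemma card_block_le a : #|[set i : 'I_m | i %/ g == a]| <= g.
Proof.
rewrite -[g in _ <= g]card_ord.
apply: (@leq_card_in _ _ (fun i : 'I_m => Ordinal (ltn_pmod i g_gt0))).
move=> i j; rewrite !inE => /eqP ia /eqP ja [ij_mod].
by apply/val_inj; rewrite /= (divn_eq i g) (divn_eq j g) ia ja ij_mod.
Qed.

Lemma load_block_pair a b : load (fun _ => 1) (block_pair a b) <= g.*2.
Proof.
rewrite /load sum1_card -addnn.
have -> : block_pair a b =
    [set i : 'I_m | i %/ g == a] :|: [set i : 'I_m | i %/ g == b].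
  by apply/setP=> i; rewrite !inE.
by rewrite (leq_trans (leq_card_setU _ _)) // leq_add ?card_block_le.
Qed.

Lemma block_lt_nblocks (i : 'I_m) : i %/ g < nblocks.
Proof.
have m_gt0 : 0 < m by apply: leq_ltn_trans (ltn_ord i).
by rewrite /nblocks addn1 ltnS leq_div2r // -ltnS prednK.
Qed.

Hypothesis g_lt_m : g < m.

Lemma block_pairs_cover (i j : 'I_m) :
  exists2 r, r \in block_pairs & (i \in r) && (j \in r).
Proof.
have ik := block_lt_nblocks i; have jk := block_lt_nblocks j.
have two_blocks : 1 < nblocks.
  by rewrite /nblocks addn1 ltnS divn_gt0 // -ltnS prednK // (leq_trans _ g_lt_m).
have [ij | ji | ij] := ltngtP (i %/ g) (j %/ g).
- exists (block_pair (j %/ g) (i %/ g)); first by rewrite block_pair_in ?ij.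
  by rewrite !inE !eqxx orbT.
- exists (block_pair (i %/ g) (j %/ g)); first by rewrite block_pair_in ?ji.
  by rewrite !inE !eqxx orbT.
- have [i0 | i_gt0] := posnP (i %/ g).
    exists (block_pair 1 0); first by rewrite block_pair_in.
    by rewrite !inE -ij i0 orbT.
  exists (block_pair (i %/ g) (i %/ g).-1); first by rewrite block_pair_in ?prednK ?leqnn.
  by rewrite !inE -ij eqxx.
Qed.

Lemma block_pairs_A2A q : g.*2 <= q -> is_A2A_schema (fun _ => 1) q block_pairs.
Proof.
move=> gq; split=> [r /allpairsPdep [a [b [_ _ ->]]] | i j _].
  exact: leq_trans (load_block_pair a b) gq.
exact: block_pairs_cover.
Qed.

End BlockPairs.

Lemma comm_cost_le_size m (w : 'I_m -> nat) q (R : seq {set 'I_m}) :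
  (forall r, r \in R -> load w r <= q) -> comm_cost w R <= size R * q.
Proof.
rewrite /comm_cost; elim: R => [|r R IH] loadR; first by rewrite big_nil.
rewrite big_cons mulSn leq_add ?loadR ?mem_head // IH // => r' r'R.
by rewrite loadR // in_cons r'R orbT.
Qed.

Lemma expn_le_pred_mul_succ q l :
  1 < q -> 2 < l -> q ^ l <= q.-1 * q.+1 ^ l.-1.
Proof.
move=> q_gt1; elim: l => // l IH; rewrite ltnS leq_eqVlt => /predU1P [<- | l_gt2].
  by rewrite !expnS expn0; nia.
have l_gt0 : 0 < l by apply: leq_trans l_gt2.
rewrite /= expnS -[in q.+1 ^ l](prednK l_gt0) expnS mulnCA.
by rewrite leq_mul ?IH.
Qed.

Lemma bin2_nblocks_le m g P :
  0 < g -> 0 < m -> m <= g.*2 * P -> 'C(nblocks m g, 2) <= m * P.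
Proof.
move=> g_gt0 m_gt0 m_le; set x := m.-1 %/ g.
have gx_le : g * x <= m.-1 by rewrite mulnC leq_divM.
have gx1_le : g * x.+1 <= m.-1 + g by rewrite mulnS addnC leq_add2r.
have : g * g * (x.+1 * x) <= g * g * (m * P).*2.
  have le1 := leq_mul gx1_le gx_le.
  have le2 : (m.-1 + g) * m.-1 <= m * g * m by rewrite leq_mul //; nia.
  have le3 : m * g * m <= m * g * (g.*2 * P) by rewrite leq_mul2l m_le orbT.
  rewrite -!mul2n; nia.
rewrite leq_pmul2l ?muln_gt0 ?g_gt0 // => key.
by rewrite bin2 /nblocks addn1 -(doubleK (m * P)) half_leq.
Qed.

Theorem theorem12 (q l : nat) :
  prime q -> 2 < l ->
  exists R : seq {set 'I_(q ^ l)},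
    [/\ is_A2A_schema (fun _ => 1) q R,
        size R <= q * (q * (q + 1)) ^ (l - 1)
      & comm_cost (fun _ => 1) R <= q ^ 2 * (q * (q + 1)) ^ (l - 1)].
Proof.
move=> /prime_gt1 q_gt1 l_gt2; set n := q ^ l; set g := q./2.
have l_gt0 : 0 < l by apply: leq_trans l_gt2.
have g_gt0 : 0 < g by rewrite half_gt0.
have g2_le_q : g.*2 <= q by rewrite halfK leq_subr.
have q_le_n : q <= n by rewrite -[q in q <= _]expn1 leq_pexp2l // ltnW.
have g_lt_n : g < n.
  by rewrite (leq_trans _ q_le_n) // (leq_trans _ g2_le_q) // -addnn -addn1 leq_add2l.
have n_le : n <= g.*2 * q.+1 ^ l.-1.
  apply: leq_trans (expn_le_pred_mul_succ q_gt1 l_gt2) _.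
  by rewrite leq_mul // halfK -subn1 leq_sub2l // leq_b1.
have bound_eq : q * (q * (q + 1)) ^ (l - 1) = n * q.+1 ^ l.-1.
  by rewrite expnMn mulnA -expnS subn1 addn1 prednK.
have size_le : size (block_pairs n g) <= n * q.+1 ^ l.-1.
  by rewrite size_block_pairs bin2_nblocks_le // expn_gt0 ltnW.
have schema := block_pairs_A2A g_gt0 g_lt_n g2_le_q.
exists (block_pairs n g); split; rewrite ?bound_eq //.
rewrite (leq_trans (comm_cost_le_size schema.1)) // expnS expn1 -mulnA bound_eq.
by rewrite mulnC leq_mul2l size_le orbT.
Qed.
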